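(* Let $F$ be a directed graph on a finite vertex set whose underlying undirected graph is simple, in which every node has out-degree at most $1$ (a directed pseudo-forest), and in which no pair of nodes is joined by edges in both directions. Let $w$ be positive edge weights and let $\chi:V(F)\to\{1,2,3\}$ be a proper coloring of the underlying undirected graph. Mark edges as follows: each node $x$ with $\chi(x)=1$ marks its outgoing edge (if it has one) when the weight of that edge is at least the sum of weights of all its incoming edges, and otherwise marks all its incoming edges; each node $x$ with $\chi(x)=2$ marks its outgoing edge if the head of that edge has color $3$ and its weight is at least the sum of the weights of the incoming edges of $x$ whose tails have color $3$, and otherwise marks all incoming edges of $x$ whose tails have color $3$; nodes of color $3$ mark nothing. Then the set of marked edges contains no cycle (its underlying undirected graph is a forest). *)

From HB Require Import structures.
From mathcomp Require Import all_boot all_order all_algebra.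
Set Implicit Arguments. Unset Strict Implicit. Unset Printing Implicit Defensive.
Import Order.TTheory GRing.Theory Num.Theory.
Local Open Scope ring_scope.

(* A directed graph on a finite vertex set T is an edge relation e : rel T
   (e x y means there is a directed edge x -> y).  Edge weights are given by
   w : T -> T -> R (only their values on edges matter).  Colours are
   natural numbers, chi : T -> nat, with values in {1,2,3}. *)

Section Marking.
Variables (T : finType) (R : realFieldType) (e : rel T) (w : T -> T -> R)
          (chi : T -> nat).

Definition in_weight (x : T) : R := \sum_(u | e u x) w u x.

Definition in_weight3 (x : T) : R := \sum_(u | e u x && (chi u == 3%N)) w u x.

Definition marks_out1 (x : T) : bool :=
  [exists y, e x y && (in_weight x <= w x y)].

Definition marks_out2 (x : T) : bool :=
  [exists y, [&& e x y, chi y == 3%N & in_weight3 x <= w x y]].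

Definition marks (x u v : T) : bool :=
  e u v &&
  (if chi x == 1%N then
     (if marks_out1 x then u == x else v == x)
   else if chi x == 2%N then
     (if marks_out2 x then u == x else (v == x) && (chi u == 3%N))
   else false).

Definition marked (u v : T) : bool := [exists x, marks x u v].

Definition marked_und (u v : T) : bool := marked u v || marked v u.

End Marking.

Definition is_forest (T : finType) (g : rel T) : Prop :=
  forall p : seq T, (3 <= size p)%N -> uniq p -> ~~ cycle g p.

(* Only the endpoints of an edge can mark it.  If v marks its incoming edge
   u -> v it does not mark its outgoing edge v -> z, so a marked v -> z must
   then be marked by z as well: along a directed walk of marked edges, once an
   edge is marked by its head all later ones are.  Head-marked edges end in
   colour 1 or 2, and in colour 2 only when they start in colour 3, so three
   consecutive head-marked edges are impossible; symmetrically for three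
   consecutive tail-marked edges.  Hence no directed walk of 5 marked edges
   exists.  Since every node has out-degree at most 1, an undirected cycle of
   marked edges would be a directed cycle, giving arbitrarily long marked
   walks. *)

From Pilot Require Import Defs.
From HB Require Import structures.
From mathcomp Require Import all_boot all_order all_algebra.
From mathcomp Require Import zify.
Set Implicit Arguments. Unset Strict Implicit. Unset Printing Implicit Defensive.
Import Order.TTheory GRing.Theory Num.Theory.
Local Open Scope ring_scope.

Lemma next_next_neq (T : eqType) (p : seq T) x :
  uniq p -> (3 <= size p)%N -> x \in p -> next p (next p x) != x.
Proof.
move=> up sp /rot_to [i q Hr].
rewrite -!(next_rot i up) Hr.
have uq : uniq (x :: q) by rewrite -Hr rot_uniq.
have sq : (3 <= size (x :: q))%N by rewrite -Hr size_rot.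
case: q uq sq {Hr} => [|b [|c r]] // uq _.
move: uq; rewrite /= !inE => /andP[/norP[xb /norP[xc _]] /andP[/norP[bc _] _]].
by rewrite eqxx (eq_sym b x) (negbTE xb) eqxx eq_sym.
Qed.

Lemma functional_cycle_walk (T : eqType) (r : rel T) (p : seq T) :
    (forall x y z, r x y -> r x z -> y = z) ->
    uniq p -> (3 <= size p)%N -> cycle (fun u v => r u v || r v u) p ->
  exists f : nat -> T, (forall n, r (f n) (f n.+1)) \/ (forall n, r (f n.+1) (f n)).
Proof.
move=> r_fun up sp cp.
have step x : x \in p -> r x (next p x) || r (next p x) x := next_cycle cp.
have iter_in x n : x \in p -> iter n (next p) x \in p.
  by move=> xp; elim: n => //= n IH; rewrite mem_next.
have [x0 x0p] : exists x0, x0 \in p.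
  by case: p {up cp step iter_in} sp => // x0 q _; exists x0; rewrite mem_head.
case: (boolP (all (fun x => r x (next p x)) p)) => [/allP fwd | /allPn [x xp bwd0]].
  by exists (fun n => iter n (next p) x0); left => n; apply/fwd/iter_in.
exists (fun n => iter n (next p) x); right; elim=> [|n IH] /=.
  by move: (step x xp); rewrite (negbTE bwd0).
have /orP[fwd1 | //] := step _ (iter_in x n.+1 xp).
have := next_next_neq up sp (iter_in x n xp).
by rewrite -(r_fun _ _ _ IH fwd1) eqxx.
Qed.

(* The colours along three consecutive head-marked edges, or along three
   tail-marked edges read backwards. *)
Lemma colour_chain_absurd (a b c : nat) :
    (1 <= b <= 3)%N -> (1 <= c <= 3)%N -> a != 3%N -> b != 3%N -> c != 3%N ->
    b != c -> (b == 2%N -> a == 3%N) -> (c == 2%N -> b == 3%N) -> False.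
Proof. lia. Qed.

Section Marking.
Variables (T : finType) (R : realFieldType) (e : rel T) (w : T -> T -> R)
          (chi : T -> nat).
Hypotheses (e_irr : forall x, ~~ e x x)
           (e_outdeg : forall x y z, e x y -> e x z -> y = z)
           (chi_range : forall x, (1 <= chi x <= 3)%N)
           (chi_proper : forall x y, e x y -> chi x != chi y).

Local Notation marks := (Defs.marks e w chi).
Local Notation marked := (Defs.marked e w chi).

Lemma marks_endpoint x u v : marks x u v -> (x == u) || (x == v).
Proof.
case/andP=> _; case: ifP => _; first by case: ifP => _ /eqP ->; rewrite eqxx ?orbT.
case: ifP => _ //; case: ifP => _; first by move/eqP->; rewrite eqxx.
by case/andP => /eqP ->; rewrite eqxx orbT.
Qed.

Lemma edge_neq u v : e u v -> (u == v) = false.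
Proof. by apply: contraTF => /eqP <-; apply: e_irr. Qed.

Lemma marked_edge u v : marked u v -> e u v.
Proof. by case/existsP => x /andP[]. Qed.

Lemma marked_functional x y z : marked x y -> marked x z -> y = z.
Proof. by move=> /marked_edge exy /marked_edge exz; apply: e_outdeg exy exz. Qed.

Lemma marked_tail_unless_head u v : marked u v -> ~~ marks v u v -> marks u u v.
Proof.
case/existsP => x mx nhead; case/orP: (marks_endpoint mx) => /eqP xE; subst x => //.
by rewrite mx in nhead.
Qed.

Lemma tail_mark_colours u v : e u v -> marks u u v ->
  chi u != 3%N /\ (chi u == 2%N -> chi v == 3%N).
Proof.
move=> euv; rewrite /Defs.marks euv /=.
have vu : (v == u) = false by rewrite eq_sym edge_neq.
case: ifP => [/eqP -> // | _]; case: ifP => [/eqP c2 | //].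
case: ifP => [m2 _ | _]; last by rewrite vu.
split; first by rewrite c2.
by case/existsP: m2 => y /and3P[euy cy _] _; rewrite (e_outdeg euv euy).
Qed.

Lemma head_mark_colours u v : e u v -> marks v u v ->
  chi v != 3%N /\ (chi v == 2%N -> chi u == 3%N).
Proof.
move=> euv; rewrite /Defs.marks euv /=.
have uv : (u == v) = false := edge_neq euv.
case: ifP => [/eqP -> // | _]; case: ifP => [/eqP c2 | //].
by case: ifP => _; [rewrite uv | case/andP => _ c3; rewrite c2].
Qed.

Lemma head_mark_no_tail_mark u v z : e u v -> e v z -> marks v u v -> ~~ marks v v z.
Proof.
move=> euv evz; rewrite /Defs.marks euv evz /=.
have uv : (u == v) = false := edge_neq euv.
have zv : (z == v) = false by rewrite eq_sym edge_neq.
by case: ifP => _; [|case: ifP => _ //]; case: ifP; rewrite ?uv ?zv.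
Qed.

Lemma head_mark_propagates u v z :
  marked u v -> marked v z -> marks v u v -> marks z v z.
Proof.
move=> muv mvz hv.
have := head_mark_no_tail_mark (marked_edge muv) (marked_edge mvz) hv.
by apply: contraNT; apply: marked_tail_unless_head.
Qed.

Lemma no_marked_walk5 y0 y1 y2 y3 y4 y5 :
  marked y0 y1 -> marked y1 y2 -> marked y2 y3 -> marked y3 y4 -> marked y4 y5 ->
  False.
Proof.
move=> m01 m12 m23 m34 m45.
case: (boolP (marks y3 y2 y3)) => [h23 | t23].
  have h34 := head_mark_propagates m23 m34 h23.
  have h45 := head_mark_propagates m34 m45 h34.
  have [c3 _] := head_mark_colours (marked_edge m23) h23.
  have [c4 c34] := head_mark_colours (marked_edge m34) h34.
  have [c5 c45] := head_mark_colours (marked_edge m45) h45.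
  exact: colour_chain_absurd (chi_range y4) (chi_range y5) c3 c4 c5
           (chi_proper (marked_edge m45)) c34 c45.
have t12 : ~~ marks y2 y1 y2 by apply: contra t23; apply: head_mark_propagates.
have t01 : ~~ marks y1 y0 y1 by apply: contra t12; apply: head_mark_propagates.
have [c0 c01] := tail_mark_colours (marked_edge m01) (marked_tail_unless_head m01 t01).
have [c1 c12] := tail_mark_colours (marked_edge m12) (marked_tail_unless_head m12 t12).
have [c2 _] := tail_mark_colours (marked_edge m23) (marked_tail_unless_head m23 t23).
have c10 : chi y1 != chi y0 by rewrite eq_sym chi_proper ?(marked_edge m01).
exact: colour_chain_absurd (chi_range y1) (chi_range y0) c2 c1 c0 c10 c12 c01.
Qed.

End Marking.

Theorem mainTheorem15 (T : finType) (R : realFieldType) (e : rel T)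
    (w : T -> T -> R) (chi : T -> nat)
    (e_irr : forall x, ~~ e x x)
    (e_anti : forall x y, e x y -> ~~ e y x)
    (e_outdeg : forall x y z, e x y -> e x z -> y = z)
    (w_pos : forall x y, e x y -> 0 < w x y)
    (chi_range : forall x, (1 <= chi x <= 3)%N)
    (chi_proper : forall x y, e x y -> chi x != chi y) :
  is_forest (marked_und e w chi).
Proof.
move=> p p_size p_uniq; apply/negP => p_cycle.
have no_walk := no_marked_walk5 e_irr e_outdeg chi_range chi_proper.
have [f [fwd | bwd]] :=
  functional_cycle_walk (marked_functional e_outdeg) p_uniq p_size p_cycle.
- exact: no_walk (fwd 0) (fwd 1) (fwd 2) (fwd 3) (fwd 4).
- exact: no_walk (bwd 4) (bwd 3) (bwd 2) (bwd 1) (bwd 0).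
Qed.
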